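(* For $k\ge4$ and $n>k(k-1)$, $$\frac{n^k-k^3n^{k-2}}{k^k-k}\le g_k(n)\le\frac{n^k-n}{k^k-k}.$$
   Context: The function $g_k$ is defined by: $g_k(s)=0$ for $0\le s<k$, and for $s\ge k\ge 3$, $g_k(s)=\max\left(\sum_{i=1}^k g_k(s_i)+\prod_{i=1}^k s_i\right)$, the maximum over all partitions $s_1+\dots+s_k=s$ into nonnegative integers with $s_i<s$ for each $i$. *)

From mathcomp Require Import all_boot all_order all_algebra.
Set Implicit Arguments. Unset Strict Implicit. Unset Printing Implicit Defensive.

(* Fuel-based auxiliary: gk_fuel k fuel s.  A partition s_1+...+s_k = s into
   nonnegative integers with each s_i < s is a finite function
   f : 'I_k -> 'I_s with \sum_i f i = s. *)
Fixpoint gk_fuel (k fuel s : nat) : nat :=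
  match fuel with
  | 0 => 0
  | fuel'.+1 =>
      if s < k then 0
      else \max_(f : {ffun 'I_k -> 'I_s} | \sum_(i < k) (f i : nat) == s)
             (\sum_(i < k) gk_fuel k fuel' (f i) + \prod_(i < k) (f i : nat))
  end.

(* g_k(s): fuel s.+1 suffices since all recursive arguments are < s. *)
Definition g (k s : nat) : nat := gk_fuel k s.+1 s.

From mathcomp Require Import all_boot all_order all_algebra.
From mathcomp Require Import zify ring lra.
Set Implicit Arguments.
Unset Strict Implicit.
Unset Printing Implicit Defensive.
Import Order.TTheory GRing.Theory Num.Theory.

(* Both bounds follow by strong induction on [s] from the recursion for [g k s].
   Upper bound: expanding [(x_1 + ... + x_k) ^ k] as a sum over all maps
   ['I_k -> 'I_k], the [k] constant maps give [\sum x_i ^ k], and the non-constant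
   ones fall into orbits under cyclic shifts, each orbit contributing at least
   [k * \prod x_i] by AM-GM; hence [\sum x_i ^ k + (k ^ k - k) \prod x_i <= s ^ k].
   Lower bound: split [s] into [k] parts [x_i] equal to [s %/ k] or [s %/ k + 1].
   AM-GM gives [\sum x_i ^ k >= k \prod x_i]. The numbers [y_i = k x_i] have mean
   [s] and spread at most [k], so the identity
   [\prod y_i * \prod (2s - y_i) = \prod (s ^ 2 - (y_i - s) ^ 2)], AM-GM and the
   Weierstrass product inequality give [k ^ k \prod x_i >= s ^ k - k ^ 3 s ^ (k - 2) / 4].
   Finally every part is at most [s / 2], so [\sum x_i ^ (k - 2) <= s ^ (k - 2) / 2]. *)

Section RealInequalities.
Local Open Scope ring_scope.
Variable R : realFieldType.

Lemma AGM_prod_le (I : finType) (a : I -> R) :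
  (forall i, 0 <= a i) -> \prod_i a i <= ((\sum_i a i) / #|I|%:R) ^+ #|I|.
Proof.
move=> a_ge0; have := Order.le_of_leif (leif_AGM (A := predT) (fun i _ => a_ge0 i)).
by rewrite /= cardT -cardE.
Qed.

Lemma AGM_card_mul_le_sum (I : finType) (a : I -> R) (p : R) :
  (forall i, 0 <= a i) -> 0 <= p -> \prod_i a i = p ^+ #|I| ->
  #|I|%:R * p <= \sum_i a i.
Proof.
move=> a_ge0 p_ge0 prod_a; have [->|I_gt0] := posnP #|I|; first by rewrite mul0r sumr_ge0.
have := AGM_prod_le a_ge0; rewrite prod_a ler_pXn2r ?nnegrE ?divr_ge0 ?sumr_ge0 //.
by rewrite ler_pdivlMr ?ltr0n // mulrC.
Qed.

Lemma sum_exprS_le (I : finType) (x : I -> R) (c : R) j :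
  (forall i, 0 <= x i <= c) -> \sum_i x i ^+ j.+1 <= c ^+ j * \sum_i x i.
Proof.
move=> x_bnd; rewrite mulr_sumr; apply: ler_sum => i _.
have /andP[x_ge0 x_le_c] := x_bnd i.
by rewrite exprS mulrC ler_wpM2r // lerXn2r ?nnegrE // (le_trans x_ge0).
Qed.

Lemma prod_subr_ge n (c : R) (a : 'I_n -> R) :
  (forall i, 0 <= a i <= c) -> c ^+ n * (c - \sum_i a i) <= c * \prod_i (c - a i).
Proof.
elim: n a => [|n IH] a a_bnd; first by rewrite !big_ord0 subr0 expr0 mul1r mulr1.
rewrite !big_ord_recr /=.
have /andP[a_ge0 a_le_c] := a_bnd ord_max.
have c_ge0 : 0 <= c := le_trans a_ge0 a_le_c.
have S_ge0 : 0 <= \sum_(i < n) a (widen_ord (leqnSn n) i).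
  by apply: sumr_ge0 => i _; case/andP: (a_bnd (widen_ord (leqnSn n) i)).
have := IH _ (fun i => a_bnd (widen_ord (leqnSn n) i)).
set S := \sum_(i < n) _; set P := \prod_(i < n) _ => IHa.
rewrite mulrA; apply: le_trans (ler_wpM2r _ IHa); last by rewrite subr_ge0.
rewrite exprSr -mulrA -mulrA ler_wpM2l ?exprn_ge0 //.
have : 0 <= S * a ord_max by rewrite mulr_ge0.
nra.
Qed.

Lemma prod_ge_sub_sum_sqr_dev n (y : 'I_n -> R) (m : R) :
  0 < m -> (forall i, 0 <= y i <= m *+ 2) -> \sum_i y i = m *+ n ->
  m ^+ n * (m ^+ 2 - \sum_i (y i - m) ^+ 2) <= m ^+ 2 * \prod_i y i.
Proof.
(* Multiply by [\prod_i (2m - y i)], which is at most [m ^+ n] by AM-GM; the result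
   [\prod_i (m ^+ 2 - (y i - m) ^+ 2)] is bounded below by [prod_subr_ge]. *)
move=> m_gt0 y_bnd sum_y.
have P_ge0 : 0 <= \prod_i y i by apply: prodr_ge0 => i _; case/andP: (y_bnd i).
have mean_pow : ((m *+ 2 *+ n - m *+ n) / n%:R) ^+ n = m ^+ n.
  rewrite -mulrnA mul2n -addnn mulrnDr addrK.
  have [-> | n_gt0] := posnP n; first by rewrite !expr0.
  by rewrite -[m *+ n]mulr_natr mulfK ?pnatr_eq0 -?lt0n.
have Q_le : \prod_i (m *+ 2 - y i) <= m ^+ n.
  have := @AGM_prod_le _ (fun i => m *+ 2 - y i).
  rewrite sumrB sumr_const card_ord sum_y mean_pow; apply=> i.
  by case/andP: (y_bnd i); rewrite subr_ge0.
have PQ : \prod_i y i * \prod_i (m *+ 2 - y i) = \prod_i (m ^+ 2 - (y i - m) ^+ 2).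
  by rewrite -big_split; apply: eq_bigr => i _ /=; rewrite mulr2n; ring.
have dev_bnd i : 0 <= (y i - m) ^+ 2 <= m ^+ 2.
  by case/andP: (y_bnd i); rewrite sqr_ge0 mulr2n /=; nra.
have := prod_subr_ge (a := fun i => (y i - m) ^+ 2) dev_bnd; rewrite -PQ => Weierstrass.
rewrite -(ler_pM2l (exprn_gt0 n m_gt0)) mulrA -exprD addnn -mul2n exprM.
apply: (le_trans Weierstrass); rewrite [in leRHS]mulrCA ler_wpM2l ?sqr_ge0 //.
by rewrite mulrC ler_wpM2r.
Qed.

Lemma sum_sqr_dev_mean_le n (y : 'I_n -> R) (m a b : R) :
  (forall i, a <= y i <= b) -> \sum_i y i = m *+ n ->
  \sum_i (y i - m) ^+ 2 <= ((b - a) / 2) ^+ 2 *+ n.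
Proof.
move=> y_bnd sum_y; set c := (a + b) / 2.
have sum_dev0 : \sum_i (y i - m) = 0 by rewrite sumrB sum_y sumr_const card_ord subrr.
have shift : \sum_i (y i - c) ^+ 2
    = \sum_i (y i - m) ^+ 2 + (\sum_i (y i - m)) * (m - c) *+ 2 + (m - c) ^+ 2 *+ n.
  have const_sum : (m - c) ^+ 2 *+ n = \sum_(i < n) (m - c) ^+ 2.
    by rewrite sumr_const card_ord.
  rewrite mulr_suml -sumrMnl const_sum -!big_split /=.
  by apply: eq_bigr => i _; rewrite !mulr2n; ring.
rewrite sum_dev0 mul0r mul0rn addr0 in shift.
have le_shift : \sum_i (y i - m) ^+ 2 <= \sum_i (y i - c) ^+ 2.
  by rewrite shift lerDl mulrn_wge0 ?sqr_ge0.
have const_sum : ((b - a) / 2) ^+ 2 *+ n = \sum_(i < n) ((b - a) / 2) ^+ 2.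
  by rewrite sumr_const card_ord.
rewrite const_sum; apply: (le_trans le_shift); apply: ler_sum => i _.
by case/andP: (y_bnd i); rewrite /c; nra.
Qed.

End RealInequalities.

Section ShiftFfun.
Local Open Scope ring_scope.
Variable n : nat.
Local Notation k := n.+1.

Definition is_const (f : {ffun 'I_k -> 'I_k}) := [forall j, f j == f ord0].

Definition ffun_shift (t : 'I_k) (f : {ffun 'I_k -> 'I_k}) := [ffun j => f j + t].

Lemma sum_const_ffun (R : nmodType) (F : {ffun 'I_k -> 'I_k} -> R) :
  \sum_(f | is_const f) F f = \sum_(i < k) F [ffun => i].
Proof.
rewrite (reindex_onto (fun i : 'I_k => [ffun => i]) (fun f => f ord0)).
  apply: eq_bigl => i; rewrite ffunE eqxx andbT.
  by apply/forallP => j; rewrite !ffunE.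
by move=> f /forallP f_const; apply/ffunP => j; rewrite ffunE; apply/esym/eqP.
Qed.

Lemma ffun_shift_inj t : injective (ffun_shift t).
Proof.
move=> f h /ffunP eq_fh; apply/ffunP => j.
by have := eq_fh j; rewrite !ffunE; apply: addIr.
Qed.

Lemma is_const_shift t f : is_const (ffun_shift t f) = is_const f.
Proof.
apply/forallP/forallP => f_const j; have := f_const j; rewrite ?ffunE.
  by move/eqP/addIr => ->.
by move/eqP => ->.
Qed.

End ShiftFfun.

Section PowerSumExpansion.
Local Open Scope ring_scope.
Variables (R : realFieldType) (n : nat) (x : 'I_n.+1 -> R).
Hypothesis x_ge0 : forall i, 0 <= x i.
Local Notation k := n.+1.
Let monomial (f : {ffun 'I_k -> 'I_k}) := \prod_j x (f j).

Lemma shift_orbit_ge f : k%:R * \prod_i x i <= \sum_(t < k) monomial (ffun_shift t f).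
Proof.
have orbit_prod : \prod_(t < k) monomial (ffun_shift t f) = (\prod_i x i) ^+ #|'I_k|.
  rewrite card_ord /monomial exchange_big /=.
  have -> : (\prod_i x i) ^+ k = \prod_(j < k) \prod_i x i by rewrite prodr_const card_ord.
  apply: eq_bigr => j _.
  (* For fixed [j], [t |-> f j + t] is a bijection, so every [x i] occurs once. *)
  by rewrite [RHS](reindex_inj (addrI (f j))); apply: eq_bigr => t _; rewrite ffunE.
have monomial_ge0 g : 0 <= monomial g by apply: prodr_ge0.
have prod_ge0 : 0 <= \prod_i x i by apply: prodr_ge0.
have := AGM_card_mul_le_sum (fun t => monomial_ge0 _) prod_ge0 orbit_prod.
by rewrite card_ord.
Qed.

Lemma sum_nonconst_monomials_ge :
  ((k ^ k)%:R - k%:R) * \prod_i x i <= \sum_(f | ~~ is_const f) monomial f.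
Proof.
have card_nonconst :
    \sum_(f : {ffun 'I_k -> 'I_k} | ~~ is_const f) (1 : R) = (k ^ k)%:R - k%:R.
  have total : \sum_(f : {ffun 'I_k -> 'I_k}) (1 : R) = (k ^ k)%:R.
    by rewrite sumr_const card_ffun !card_ord.
  rewrite (bigID (@is_const n)) /= sum_const_ffun sumr_const card_ord in total.
  by rewrite -total [k%:R + _]addrC addrK.
have shift_sum t : \sum_(f | ~~ is_const f) monomial f
    = \sum_(f | ~~ is_const f) monomial (ffun_shift t f).
  rewrite (reindex_inj (@ffun_shift_inj n t)).
  by apply: eq_bigl => f; rewrite is_const_shift.
have sum_orbits : k%:R * \sum_(f | ~~ is_const f) monomial f
    = \sum_(f | ~~ is_const f) \sum_(t < k) monomial (ffun_shift t f).
  rewrite exchange_big /=; under [RHS]eq_bigr => t _ do rewrite -shift_sum.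
  by rewrite sumr_const card_ord mulr_natl.
rewrite -card_nonconst mulr_suml -(@ler_pM2l _ k%:R) ?ltr0n // sum_orbits mulr_sumr.
by apply: ler_sum => f _; rewrite mul1r shift_orbit_ge.
Qed.

Lemma sum_expr_add_prod_le :
  \sum_i x i ^+ k + ((k ^ k)%:R - k%:R) * \prod_i x i <= (\sum_i x i) ^+ k.
Proof.
have -> : (\sum_i x i) ^+ k = \prod_(j < k) \sum_i x i by rewrite prodr_const card_ord.
rewrite bigA_distr_bigA /= (bigID (@is_const n)) /= sum_const_ffun.
have const_terms :
    \sum_(i < k) \prod_j x (([ffun => i] : {ffun 'I_k -> 'I_k}) j) = \sum_i x i ^+ k.
  apply: eq_bigr => i _; rewrite -[in RHS](card_ord k) -prodr_const.
  by apply: eq_bigr => j _; rewrite ffunE.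
by rewrite const_terms lerD2l; apply: sum_nonconst_monomials_ge.
Qed.

End PowerSumExpansion.

Definition balanced_part (k s i : nat) : nat := s %/ k + (i < s %% k).

Lemma sum_balanced_part k s : 0 < k -> \sum_(i < k) balanced_part k s i = s.
Proof.
move=> k_gt0; rewrite big_split /= sum_nat_const card_ord -big_mkcond /=.
rewrite -(big_ord_widen k (fun _ => 1)); last exact: ltnW (ltn_pmod s k_gt0).
by rewrite sum_nat_const card_ord muln1 mulnC -divn_eq.
Qed.

Lemma balanced_part_bounds k s i :
  s %/ k <= balanced_part k s i <= (s %/ k).+1.
Proof. by rewrite leq_addr -addn1 leq_add2l leq_b1. Qed.

Lemma balanced_part_lt k s i : 1 < k <= s -> balanced_part k s i < s.
Proof.
case/andP=> k_gt1 k_le_s; have q_gt0 : 0 < s %/ k by rewrite divn_gt0 // ltnW.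
rewrite /balanced_part {3}(divn_eq s k).
move: (s %/ k) (s %% k) q_gt0 => q r q_gt0.
have lt_q_qk : q < q * k by rewrite -[X in X < _]muln1 ltn_pmul2l.
by case: (ltnP i r) => [lt_i_r | _]; lia.
Qed.

Section BalancedPartition.
Variable R : realFieldType.
Variables k s : nat.
Hypotheses (k_gt1 : 1 < k) (k_le_s : k <= s).
Local Notation q := (s %/ k).
Let x (i : 'I_k) : R := (balanced_part k s i)%:R.

Let q_gt0 : 0 < q. Proof. by rewrite divn_gt0 // ltnW. Qed.
Let kq_le_s : k * q <= s. Proof. by rewrite mulnC leq_trunc_div. Qed.

Local Open Scope ring_scope.

Lemma sum_balanced_partR : \sum_i x i = s%:R.
Proof. by rewrite -natr_sum sum_balanced_part // ltnW. Qed.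

Lemma balanced_prod_ge :
  4 * s%:R ^+ k <= 4 * (k%:R ^+ k * \prod_i x i) + k%:R ^+ 3 * s%:R ^+ (k - 2).
Proof.
pose y i := k%:R * x i.
have s_gt0 : 0 < s%:R :> R by rewrite ltr0n (leq_trans _ k_le_s) // ltnW.
have sum_y : \sum_i y i = s%:R *+ k by rewrite -mulr_sumr sum_balanced_partR mulr_natl.
have y_bnd i : (k * q)%:R <= y i <= (k * q)%:R + k%:R.
  have /andP[lo hi] := balanced_part_bounds k s i.
  by rewrite /y /x -natrD -!natrM !ler_nat leq_mul2l lo -mulnSr leq_mul2l hi !orbT.
have y_range i : 0 <= y i <= s%:R *+ 2.
  have /andP[_ hi] := y_bnd i; rewrite mulr_ge0 ?ler0n //= (le_trans hi) //.
  rewrite -natrD -[_ *+ 2]mulr_natr -natrM ler_nat -mulnSr muln2 -addnn mulnS addnC.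
  exact: leq_add.
have := sum_sqr_dev_mean_le y_bnd sum_y.
rewrite addrAC subrr add0r => dev_le.
have := prod_ge_sub_sum_sqr_dev s_gt0 y_range sum_y.
rewrite prodrMl card_ord => prod_ge.
have s_pow : s%:R ^+ k = s%:R ^+ 2 * s%:R ^+ (k - 2) :> R by rewrite -exprD subnKC.
rewrite s_pow -mulrA ler_pM2l ?exprn_gt0 // in prod_ge; rewrite s_pow.
have t_ge0 : 0 <= s%:R ^+ (k - 2) :> R by rewrite exprn_ge0.
have dev_le4 : 4 * \sum_i (y i - s%:R) ^+ 2 <= k%:R ^+ 3.
  by move: dev_le; rewrite -mulr_natr; lra.
move: prod_ge dev_le4 t_ge0.
set t := _ ^+ (k - 2); set V := \sum_i _; set KP := _ * \prod_i _; nra.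
Qed.

Lemma sum_balanced_pow_le : (4 <= k)%N ->
  2 * \sum_i x i ^+ (k - 2) <= s%:R ^+ (k - 2).
Proof.
move=> k_ge4; have k2E : (k - 2 = (k - 3).+1)%N by rewrite -subSn ?subSS // ltnW.
have two_q1_le_s : (2 * q.+1 <= s)%N.
  apply: leq_trans (leq_trans (leq_mul k_ge4 (leqnn q)) kq_le_s).
  by have := q_gt0; lia.
have pow_le : (2 * q.+1 ^ (k - 3) <= s ^ (k - 3))%N.
  have two_le : (2 <= 2 ^ (k - 3))%N by rewrite -{1}(expn1 2) leq_exp2l // subn_gt0.
  by rewrite (leq_trans (leq_mul two_le (leqnn _))) // -expnMn leq_exp2r // subn_gt0.
have x_bnd i : 0 <= x i <= q.+1%:R.
  by case/andP: (balanced_part_bounds k s i) => _ hi; rewrite ler0n ler_nat.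
rewrite k2E; apply: le_trans (ler_wpM2l _ (sum_exprS_le _ x_bnd)) _ => //.
rewrite sum_balanced_partR mulrA exprSr ler_wpM2r ?ler0n //.
by move: pow_le; rewrite -(ler_nat R) natrM !natrX.
Qed.

Lemma balanced_lower_step : (4 <= k)%N ->
  s%:R ^+ k - k%:R ^+ 3 * s%:R ^+ (k - 2)
  <= \sum_i (x i ^+ k - k%:R ^+ 3 * x i ^+ (k - 2)) + (k%:R ^+ k - k%:R) * \prod_i x i.
Proof.
move=> k_ge4; have x_ge0 i : 0 <= x i by rewrite ler0n.
have AGM : k%:R * \prod_i x i <= \sum_i x i ^+ k.
  have := @AGM_card_mul_le_sum _ _ (fun i => x i ^+ k) (\prod_i x i).
  by rewrite card_ord prodrXl; apply=> // [i|]; rewrite ?exprn_ge0 ?prodr_ge0.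
have := sum_balanced_pow_le k_ge4; rewrite sumrB -mulr_sumr.
have c_ge0 : 0 <= k%:R ^+ 3 :> R by rewrite exprn_ge0.
move=> /(ler_wpM2l c_ge0); move: balanced_prod_ge AGM.
set P := \prod_i _; set S := s%:R ^+ k; set T := s%:R ^+ (k - 2).
set c := k%:R ^+ 3; set A := \sum_i _; set B := \sum_i _.
have cT_ge0 : 0 <= c * T by rewrite mulr_ge0 ?exprn_ge0.
lra.
Qed.

End BalancedPartition.

Lemma gk_fuelE k s fuel : s < fuel -> gk_fuel k fuel s = g k s.
Proof.
elim/ltn_ind: s fuel => s IH [|fuel] //= lt_s_fuel.
rewrite /g /=; case: ltnP => // _.
apply: eq_bigr => f _; congr (_ + _); apply: eq_bigr => i _.
have lt_fi_s := ltn_ord (f i).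
by rewrite IH ?(IH _ lt_fi_s) // (leq_trans lt_fi_s).
Qed.

Lemma g_small k s : s < k -> g k s = 0.
Proof. by move=> lt_s_k; rewrite /g /= lt_s_k. Qed.

Lemma gE k s : k <= s -> g k s =
  \max_(f : {ffun 'I_k -> 'I_s} | \sum_(i < k) (f i : nat) == s)
     (\sum_(i < k) g k (f i) + \prod_(i < k) (f i : nat)).
Proof.
move=> le_k_s; rewrite {1}/g /= ltnNge le_k_s /=.
by apply: eq_bigr => f _; congr (_ + _); apply: eq_bigr => i _; rewrite gk_fuelE.
Qed.

Local Open Scope ring_scope.

Lemma exprnn_sub_gt0 (R : numDomainType) k : (1 < k)%N -> 0 < k%:R ^+ k - k%:R :> R.
Proof.
by move=> k_gt1; rewrite subr_gt0 -natrX ltr_nat -{1}(expn1 k) ltn_exp2l // ltnW.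
Qed.

Lemma natr_bigmax_le (R : numDomainType) (I : finType) (P : pred I) (F : I -> nat)
    (b : R) :
  0 <= b -> (forall i, P i -> (F i)%:R <= b) -> (\max_(i | P i) F i)%:R <= b.
Proof. by move=> b_ge0 F_le; elim/big_ind: _ => // m n; rewrite /maxn; case: ifP. Qed.

Lemma g_upper k s : (1 < k)%N ->
  (g k s)%:R <= (s%:R ^+ k - s%:R) / (k%:R ^+ k - k%:R) :> rat.
Proof.
case: k => [//|n] k_gt1; have D_gt0 := exprnn_sub_gt0 rat k_gt1.
have bound_ge0 m : 0 <= (m%:R ^+ n.+1 - m%:R) / (n.+1%:R ^+ n.+1 - n.+1%:R) :> rat.
  apply: divr_ge0; last exact: ltW.
  rewrite subr_ge0 -natrX ler_nat.
  by case: m => // m; rewrite -{1}(expn1 m.+1) leq_pexp2l // ltnW.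
elim/ltn_ind: s => s IH; have [lt_s_k | le_k_s] := ltnP s n.+1; first by rewrite g_small.
rewrite gE //; apply: natr_bigmax_le => // f /eqP sum_f.
rewrite natrD natr_sum natr_prod.
apply: le_trans (lerD (ler_sum _ (fun i _ => IH _ (ltn_ord (f i)))) (lexx _)) _.
have := @sum_expr_add_prod_le rat _ _ (fun i => ler0n _ (f i)).
rewrite -natr_sum sum_f natrX => expansion.
rewrite -mulr_suml sumrB -natr_sum sum_f ler_pdivlMr // mulrDl divfK ?gt_eqF //.
set P := \prod_i _ in expansion *; set D := _ - n.+1%:R in expansion *; lra.
Qed.

Lemma g_lower k s : (4 <= k)%N ->
  (s%:R ^+ k - k%:R ^+ 3 * s%:R ^+ (k - 2)) / (k%:R ^+ k - k%:R) <= (g k s)%:R :> rat.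
Proof.
move=> k_ge4; have k_gt1 : (1 < k)%N by apply: leq_trans k_ge4.
have D_gt0 := exprnn_sub_gt0 rat k_gt1.
elim/ltn_ind: s => s IH; have [lt_s_k | le_k_s] := ltnP s k.
  rewrite g_small // pmulr_lle0 ?invr_gt0 // subr_le0.
  have -> : s%:R ^+ k = s%:R ^+ 2 * s%:R ^+ (k - 2) :> rat by rewrite -exprD subnKC.
  rewrite ler_wpM2r ?exprn_ge0 //.
  rewrite -!natrX ler_nat (@leq_trans (k ^ 2)) ?leq_exp2r //; first exact: ltnW.
  exact: leq_pexp2l (ltnW k_gt1) (isT : (2 <= 3)%N).
have kks : (1 < k <= s)%N by rewrite k_gt1 le_k_s.
pose f : {ffun 'I_k -> 'I_s} := [ffun i : 'I_k => Ordinal (balanced_part_lt i kks)].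
have f_val i : (f i : nat) = balanced_part k s i by rewrite ffunE.
have f_sum : (\sum_i (f i : nat) == s)%N.
  by rewrite (eq_bigr _ (fun i _ => f_val i)) sum_balanced_part // ltnW.
rewrite gE //; apply: le_trans (_ : _ <= (\sum_i g k (f i) + \prod_i (f i : nat))%N%:R) _.
  rewrite natrD natr_sum natr_prod.
  under eq_bigr do rewrite f_val; under [\prod_i _]eq_bigr do rewrite f_val.
  have IH_parts := fun (i : 'I_k) (_ : true) => IH _ (balanced_part_lt i kks).
  apply: le_trans _ (lerD (ler_sum _ IH_parts) (lexx _)).
  rewrite -mulr_suml ler_pdivrMr // mulrDl divfK ?gt_eqF // [_ * (_ - _)]mulrC.
  exact: balanced_lower_step.
by rewrite ler_nat; apply: leq_bigmax_cond.
Qed.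

Theorem lemma4p6 (k n : nat) (hk : (4 <= k)%N) (hn : (k * (k - 1) < n)%N) :
  ((n%:Q ^+ k - k%:Q ^+ 3 * n%:Q ^+ (k - 2)) / (k%:Q ^+ k - k%:Q) <= (g k n)%:Q)
  /\ ((g k n)%:Q <= (n%:Q ^+ k - n%:Q) / (k%:Q ^+ k - k%:Q)).
Proof.
(* Both bounds hold for every [n]. *)
by split; [apply: g_lower | apply: g_upper; apply: leq_trans hk].
Qed.
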